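(* Let $S$ be an additively reduced semidomain and $G$ a torsion-free abelian group, totally ordered compatibly with addition, in which every subset that is bounded below is well-ordered. Let $f=\sum_{i=0}^\infty s_ix^{g_i}\in S[\![G]\!]$ with $s_i\neq0$ for all $i\in\mathbb{N}_0$. If for some $N\in\mathbb{N}_0$ the sequence $(g_{N+i+1}-g_{N+i})_{i\in\mathbb{N}_0}$ is strictly increasing, then $f$ is monolithic.
   Context: A semidomain is a subsemiring (containing $0$ and $1$) of an integral domain. $S$ is additively reduced if $0$ is the only invertible element of $(S,+)$. $S[\![G]\!]=\{\sum_{i=0}^\infty s_ix^{g_i} : s_i\in S,\ g_i\in G,\ g_i<g_{i+1}\}$ (with respect to the given order on $G$) with operations defined as for polynomials. A nonzero $f$ is monolithic if $f=pq$ with $p,q\in S[\![G]\!]$ implies one of $p,q$ is a monomial $sx^g$. *)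

From HB Require Import structures.
From mathcomp Require Import all_boot all_order all_algebra.
From mathcomp Require Import boolp classical_sets functions cardinality fsbigop.
Set Implicit Arguments. Unset Strict Implicit. Unset Printing Implicit Defensive.
Import Order.TTheory GRing.Theory Num.Theory.
Local Open Scope ring_scope.

Definition semidomain (D : idomainType) (S : {pred D}) : Prop :=
  [/\ 0 \in S, 1 \in S,
      (forall x y, x \in S -> y \in S -> x + y \in S) &
      (forall x y, x \in S -> y \in S -> x * y \in S)].

Definition additively_reduced (D : idomainType) (S : {pred D}) : Prop :=
  forall x, x \in S -> (exists2 y, y \in S & x + y = 0) -> x = 0.

Definition ordered_group (G : zmodType) (le : rel G) : Prop :=
  [/\ (forall a, le a a),
      (forall a b, le a b -> le b a -> a = b),
      (forall a b c, le a b -> le b c -> le a c),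
      (forall a b, le a b || le b a) &
      (forall a b c, le a b -> le (a + c) (b + c))].

Definition torsion_free (G : zmodType) : Prop :=
  forall (n : nat) (x : G), x *+ n.+1 = 0 -> x = 0.

Definition ltG (G : zmodType) (le : rel G) (a b : G) : Prop := le a b /\ a <> b.

Definition well_ordered (G : zmodType) (le : rel G) (A : G -> Prop) : Prop :=
  forall B : G -> Prop, (forall x, B x -> A x) -> (exists x, B x) ->
    exists2 m, B m & forall x, B x -> le m x.

Definition bounded_below_well_ordered (G : zmodType) (le : rel G) : Prop :=
  forall A : G -> Prop, (exists b, forall x, A x -> le b x) -> well_ordered le A.

(** Elements of S[[G]] are represented by their coefficient functions
    c : G -> D.  c lies in S[[G]] iff all coefficients lie in S and
    c = sum_i c(g_i) x^{g_i} for some strictly increasing g : nat -> G,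
    i.e. the support of c is contained in the range of such a g. *)
Definition in_series (D : idomainType) (S : {pred D}) (G : zmodType)
    (le : rel G) (c : G -> D) : Prop :=
  (forall h, c h \in S) /\
  exists g : nat -> G, (forall i, ltG le (g i) (g i.+1)) /\
    (forall h, c h <> 0 -> exists i, h = g i).

Definition series_mul (D : idomainType) (G : zmodType) (p q : G -> D) : G -> D :=
  fun h => (\sum_(a \in [set: G]) p a * q (h - a))%R.

Definition monomial (D : idomainType) (G : zmodType) (s : D) (g : G) : G -> D :=
  fun h => if h == g then s else 0.

Definition is_monomial (D : idomainType) (S : {pred D}) (G : zmodType)
    (p : G -> D) : Prop :=
  exists2 s, s \in S & exists g, p = monomial s g.

Definition monolithic (D : idomainType) (S : {pred D}) (G : zmodType)
    (le : rel G) (f : G -> D) : Prop :=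
  (exists h, f h <> 0) /\
  forall p q : G -> D, in_series S le p -> in_series S le q ->
    f = series_mul p q -> is_monomial S p \/ is_monomial S q.

From mathcomp Require Import all_boot all_order all_algebra.
From mathcomp Require Import boolp classical_sets cardinality fsbigop.
Set Implicit Arguments. Unset Strict Implicit. Unset Printing Implicit Defensive.
Import GRing.Theory.
Local Open Scope ring_scope.

(* Suppose f = p q with neither factor a monomial, and pick a0 < a1 in the
   support of p and b0 < b1 in that of q.  As S is additively reduced, nothing
   cancels in p q, so supp f contains supp p + supp q.  Thus every a0 + b with
   b in supp q is followed in supp f by a1 + b, at the fixed distance a1 - a0;
   since the gaps of supp f eventually exceed any positive element, all these
   a0 + b lie below some B1, and likewise all a + b0 (a in supp p) below some B2.
   Every h = a + b in supp f then satisfies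
   h + a0 + b0 = (a0 + b) + (a + b0) <= B1 + B2,
   whereas the exponents g_i are unbounded: by well-ordering of bounded-below
   sets, no strictly increasing sequence in G is bounded. *)

Lemma series_mul_supp (D : idomainType) (G : zmodType) (p q : G -> D) h :
  series_mul p q h != 0 -> exists2 a, p a != 0 & q (h - a) != 0.
Proof.
apply: contraNP => no_a; apply/eqP/fsbig1 => a _.
have [->|pa] := eqVneq (p a) 0; first by rewrite mul0r.
have [->|qa] := eqVneq (q (h - a)) 0; first by rewrite mulr0.
by case: no_a; exists a.
Qed.

Section Semidomain.
Variables (D : idomainType) (S : {pred D}).
Hypotheses (HS : semidomain S) (HAR : additively_reduced S).

Lemma semidomain_sum (I : Type) (r : seq I) (F : I -> D) :
  (forall i, F i \in S) -> \sum_(i <- r) F i \in S.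
Proof.
case: HS => S0 _ SD _ FS; elim: r => [|i r IH]; rewrite ?big_nil ?big_cons //.
exact: SD.
Qed.

Lemma reduced_addr_eq0 x y : x \in S -> y \in S -> x + y = 0 -> x = 0 /\ y = 0.
Proof.
by move=> xS yS xy0; split; apply: HAR => //; [exists y | exists x; rewrite // addrC].
Qed.

Lemma reduced_sum_eq0 (I : eqType) (r : seq I) (F : I -> D) :
  (forall i, F i \in S) -> \sum_(i <- r) F i = 0 -> {in r, forall i, F i = 0}.
Proof.
move=> FS; elim: r => [//|j r IH]; rewrite big_cons.
move=> /reduced_addr_eq0[//||Fj0 sum0]; first exact: semidomain_sum.
by move=> i; rewrite inE => /predU1P[->|/IH]; last apply.
Qed.

End Semidomain.

Section OrderedGroup.
Variables (G : zmodType) (le : rel G).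
Hypothesis Hle : ordered_group le.

Lemma leG_refl a : le a a.
Proof. by case: Hle. Qed.

Lemma leG_anti a b : le a b -> le b a -> a = b.
Proof. by case: Hle => _ + _ _ _; apply. Qed.

Lemma leG_trans a b c : le a b -> le b c -> le a c.
Proof. by case: Hle => _ _ + _ _; apply. Qed.

Lemma leG_total a b : le a b || le b a.
Proof. by case: Hle. Qed.

Lemma leG_add2r c a b : le (a + c) (b + c) = le a b.
Proof.
have addr_mono x y z : le x y -> le (x + z) (y + z) by case: Hle => _ _ _ _; apply.
by apply/idP/idP => [/(addr_mono _ _ (- c))|/addr_mono //]; rewrite !addrK.
Qed.

Lemma leG_add2l c a b : le (c + a) (c + b) = le a b.
Proof. by rewrite ![c + _]addrC leG_add2r. Qed.

Lemma leG_add a b c d : le a b -> le c d -> le (a + c) (b + d).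
Proof.
by move=> ab cd; apply: (@leG_trans _ (b + c)); rewrite ?leG_add2r ?leG_add2l.
Qed.

Lemma leG_opp2 a b : le (- a) (- b) = le b a.
Proof. by rewrite -(leG_add2r (a + b)) addKr [a + b]addrC addKr. Qed.

Lemma leG_sub2l c a b : le (c - a) (c - b) = le b a.
Proof. by rewrite leG_add2l leG_opp2. Qed.

Lemma leG_subr_ge0 a b : le 0 (b - a) = le a b.
Proof. by rewrite -(leG_add2r (- a) a) subrr. Qed.

Lemma ltG_subr_gt0 a b : ltG le a b -> ltG le 0 (b - a).
Proof. by case=> ab nab; split=> [|/esym/subr0_eq/esym //]; rewrite leG_subr_ge0. Qed.

Definition strictly_increasing (u : nat -> G) := forall i, ltG le (u i) (u i.+1).

Lemma incr_le u : strictly_increasing u -> forall i j, (i <= j)%N -> le (u i) (u j).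
Proof.
move=> hu i; elim=> [|j IH]; first by rewrite leqn0 => /eqP ->; apply: leG_refl.
rewrite leq_eqVlt ltnS => /orP[/eqP -> | /IH uij]; first exact: leG_refl.
by apply: leG_trans uij _; case: (hu j).
Qed.

Hypothesis Hwo : bounded_below_well_ordered le.

(* Otherwise the values [H - u n], bounded below by 0, would have no least one. *)
Lemma incr_unbounded u : strictly_increasing u -> forall H, exists n, ~~ le (u n) H.
Proof.
move=> hu H; apply: contrapT => /forallNP bounded.
have le_uH n : le (u n) H by apply/negPn/negP/bounded.
pose A x := exists n, x = H - u n.
have A_ge0 : exists b, forall x, A x -> le b x.
  by exists 0 => _ [n ->]; rewrite leG_subr_ge0.
have [_ [k ->] min_k] := Hwo A_ge0 (fun x Ax => Ax) (ex_intro _ _ (ex_intro _ 0%N erefl)).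
have := min_k _ (ex_intro _ k.+1 erefl); rewrite leG_sub2l.
by case: (hu k) => uk ne /(leG_anti uk).
Qed.

Section SparseSupport.
Variables (g : nat -> G) (N : nat).
Hypotheses (g_incr : strictly_increasing g)
  (gaps_incr : strictly_increasing (fun i => g (N + i).+1 - g (N + i))).

Lemma gaps_eventually_gt d : exists M, forall j, (M <= j)%N -> ~~ le (g j.+1 - g j) d.
Proof.
have [n gap_n] := incr_unbounded gaps_incr d.
exists (N + n)%N => j Mj; apply: contra gap_n => /= gap_j.
have Nj : (N <= j)%N by apply: leq_trans Mj; apply: leq_addr.
have n_le : (n <= j - N)%N by rewrite leq_subRL.
by have := incr_le gaps_incr n_le; rewrite /= subnKC // => /leG_trans; apply.
Qed.

Variables (D : idomainType) (f : G -> D).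
Hypothesis f_supp : forall x, f x != 0 -> exists i, x = g i.

(* Two support points of [f] at distance [d] lie at consecutive or farther
   indices, so beyond the point where all gaps exceed [d] there are none. *)
Lemma supp_shift_bounded d : ltG le 0 d ->
  exists B, forall x, f x != 0 -> f (x + d) != 0 -> le x B.
Proof.
case=> d_ge0 d_neq0; have [M gapM] := gaps_eventually_gt d.
exists (g M) => _ /f_supp[j ->] /f_supp[k e].
have [jM|Mj] := leqP j M; first exact: (incr_le g_incr jM).
have jk : (j < k)%N.
  rewrite ltnNge; apply/negP => /(incr_le g_incr).
  rewrite -e -{2}(addr0 (g j)) leG_add2l => d_le0.
  exact: d_neq0 (leG_anti d_ge0 d_le0).
have := gapM j (ltnW Mj); rewrite -(leG_add2r (g j)) subrK addrC e.
by rewrite (incr_le g_incr jk).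
Qed.

End SparseSupport.

Section Series.
Variables (D : idomainType) (S : {pred D}).
Hypotheses (HS : semidomain S) (HAR : additively_reduced S).

Lemma nonmonomial_supp2 (c : G -> D) : in_series S le c -> ~ is_monomial S c ->
  exists a0 a1, [/\ ltG le a0 a1, c a0 != 0 & c a1 != 0].
Proof.
move=> [cS _] not_mono; apply: contrapT => no_pair; apply: not_mono.
have [[a ca] | c0] := pselect (exists a, c a != 0); last first.
  case: HS => S0 _ _ _; exists 0 => //; exists 0; apply/funext => h.
  by rewrite /monomial if_same; apply/eqP/negPn/negP => ch; apply: c0; exists h.
exists (c a) => //; exists a; apply/funext => h; rewrite /monomial.
case: eqP => [-> // | h_neq_a]; apply/eqP/negPn/negP => ch; apply: no_pair.
case/orP: (leG_total a h) => [le_ah | le_ha]; last by exists h, a.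
by exists a, h; split=> //; split=> // /esym.
Qed.

Variables (p q : G -> D).
Hypotheses (p_series : in_series S le p) (q_series : in_series S le q).

(* A term [p a * q (h - a) != 0] has [a = gp i] and [h - a >= gq 0], which
   bounds [i] since [gp] is unbounded. *)
Lemma series_mul_finite h : finite_set [set a | p a * q (h - a) != 0].
Proof.
case: p_series => _ [gp [gp_incr p_supp]]; case: q_series => _ [gq [gq_incr q_supp]].
have [n gp_n] := incr_unbounded gp_incr (h - gq 0%N).
apply: (sub_finite_set _ (finite_image gp (finite_II n))) => a /=.
rewrite mulf_eq0 negb_or => /andP[/eqP/p_supp[i ->] /eqP/q_supp[k e]].
exists i => //=; rewrite ltnNge; apply: contra gp_n => ni.
apply: (leG_trans (incr_le gp_incr ni)).
by rewrite -(leG_sub2l h) subKr e (incr_le gq_incr (leq0n k)).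
Qed.

Lemma series_mul_neq0 a b : p a != 0 -> q b != 0 -> series_mul p q (a + b) != 0.
Proof.
move=> pa qb; apply/eqP => pq0.
have /eqP Fa : p a * q (a + b - a) != 0 by rewrite addrAC subrr add0r mulf_neq0.
apply: (Fa); apply: (reduced_sum_eq0 HS HAR _ pq0).
  by move=> x; case: HS => _ _ _ SM; apply: SM; [case: p_series | case: q_series].
rewrite in_finite_support; first exact/mem_set.
by apply: (sub_finite_set _ (series_mul_finite (a + b))) => x [_ /eqP].
Qed.

Lemma nonmonomial_mul_supp_bounded :
  (forall d, ltG le 0 d -> exists B, forall x,
     series_mul p q x != 0 -> series_mul p q (x + d) != 0 -> le x B) ->
  ~ is_monomial S p -> ~ is_monomial S q ->
  exists B, forall h, series_mul p q h != 0 -> le h B.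
Proof.
move=> shift_bounded /(nonmonomial_supp2 p_series) [a0 [a1 [a01 pa0 pa1]]].
move=> /(nonmonomial_supp2 q_series) [b0 [b1 [b01 qb0 qb1]]].
have [B1 B1_ge] := shift_bounded _ (ltG_subr_gt0 a01).
have [B2 B2_ge] := shift_bounded _ (ltG_subr_gt0 b01).
have le_B1 b : q b != 0 -> le (a0 + b) B1.
  by move=> qb; apply: B1_ge; [|rewrite addrAC subrKC]; apply: series_mul_neq0.
have le_B2 a : p a != 0 -> le (a + b0) B2.
  by move=> pa; apply: B2_ge; [|rewrite -addrA subrKC]; apply: series_mul_neq0.
exists (B1 + B2 - (a0 + b0)) => h /series_mul_supp[a pa qa].
rewrite -(leG_add2r (a0 + b0)) subrK.
have -> : h + (a0 + b0) = a0 + (h - a) + (a + b0) by rewrite -addrA subrKA addrCA.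
exact: leG_add (le_B1 _ qa) (le_B2 _ pa).
Qed.

End Series.

End OrderedGroup.

Theorem corollary4p5 (D : idomainType) (S : {pred D}) (G : zmodType) (le : rel G)
    (f : G -> D) (s : nat -> D) (g : nat -> G) :
  semidomain S -> additively_reduced S ->
  torsion_free G -> ordered_group le -> bounded_below_well_ordered le ->
  (* f = sum_{i>=0} s_i x^{g_i} in S[[G]] with g strictly increasing, s_i in S, s_i <> 0 *)
  (forall i, ltG le (g i) (g i.+1)) ->
  (forall i, s i \in S) -> (forall i, s i <> 0) ->
  (forall i, f (g i) = s i) -> (forall h, (forall i, h <> g i) -> f h = 0) ->
  (exists N : nat, forall i : nat,
     ltG le (g (N + i)%N.+1 - g (N + i)%N) (g (N + i.+1)%N.+1 - g (N + i.+1)%N)) ->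
  monolithic S le f.
Proof.
move=> HS HAR _ Hle Hwo g_incr _ s_neq0 fg f0 [N gaps_incr].
split; first by exists (g 0%N); rewrite fg.
move=> p q p_series q_series f_pq.
have [|p_nonmono] := pselect (is_monomial S p); first by left.
have [|q_nonmono] := pselect (is_monomial S q); first by right.
have f_supp x : f x != 0 -> exists i, x = g i.
  by apply: contraNP => /forallNP x_notin; apply/eqP/f0.
have [|B B_ge] := nonmonomial_mul_supp_bounded Hle Hwo HS HAR p_series q_series _
  p_nonmono q_nonmono.
  by rewrite -f_pq => d; apply: (supp_shift_bounded Hle Hwo g_incr gaps_incr f_supp).
have [n] := incr_unbounded Hle Hwo g_incr B; case/negP.
by apply: B_ge; rewrite -f_pq fg; apply/eqP.
Qed.
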